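(* Let $\nu>-1$ be real and let $j_1^\nu$ be the smallest positive zero of $J_\nu(\cdot;q^2)$. Then $j_1^\nu<q^{-1}\sqrt{1+q^{2\nu}}$.
   Context: Fix $0<q<1$. For $a\in\mathbb C$ put $(a;q)_0=1$, $(a;q)_k=\prod_{i=0}^{k-1}(1-aq^i)$, $(a;q)_\infty=\prod_{i\ge0}(1-aq^i)$. For $\nu\in\mathbb C$ and $x\in\mathbb C\setminus\{0\}$ the Hahn–Exton $q$-Bessel function is $$J_\nu(x;q^2)=\frac{x^\nu}{(q^2;q^2)_\infty}\sum_{k=0}^\infty\frac{(-1)^kq^{k(k+1)}(q^{2\nu+2k+2};q^2)_\infty}{(q^2;q^2)_k}\,x^{2k},$$ with $x^\nu=\exp(\nu\operatorname{Log}x)$ (principal branch). For $\nu>-1$ this function has infinitely many positive zeros. *)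

From Stdlib Require Import Reals.
From Coquelicot Require Import Coquelicot.
Open Scope R_scope.

Fixpoint qpoch (a b : R) (k : nat) : R :=
  match k with
  | O => 1
  | S k' => qpoch a b k' * (1 - a * b ^ k')
  end.

Definition qpoch_inf (a b : R) : R := real (Lim_seq (fun n => qpoch a b n)).

(* Hahn--Exton q-Bessel function J_nu(x; q^2), for real nu and real x > 0
   (so that x^nu = exp(nu ln x) is the principal power, Rpower x nu).
   q^(2nu+2k+2) is the real power Rpower q (2 nu + 2k + 2). *)
Definition HE_J (q nu x : R) : R :=
  Rpower x nu / qpoch_inf (q ^ 2) (q ^ 2) *
  Series (fun k : nat =>
    (-1) ^ k * q ^ (k * (k + 1)) *
    qpoch_inf (Rpower q (2 * nu + 2 * INR k + 2)) (q ^ 2) /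
    qpoch (q ^ 2) (q ^ 2) k * x ^ (2 * k)).

(* Write p = q^2 and a = q^(2 nu), so that a p < 1 exactly when nu > -1.  Then
   J_nu(x; q^2) = x^nu / (p;p)_oo * H(x^2) for an entire power series H with
   H(0) = (a p; p)_oo > 0, and the recurrence of its coefficients gives the
   q-difference equation H(s) + (p s - 1 - a) H(p s) + a H(p^2 s) = 0.  At
   s0 = (1 + a) / p the middle term vanishes, so H(s0) = - a H(p^2 s0): H changes
   sign on [0, s0] and has a first positive zero m < s0, whence
   j1 = sqrt m < sqrt s0 = q^-1 sqrt (1 + q^(2 nu)). *)
From Stdlib Require Import Reals Lra Lia.
From Coquelicot Require Import Coquelicot.
Open Scope R_scope.

Lemma exp_le_exp x y : x <= y -> exp x <= exp y.
Proof. intros [hlt|heq]; [left; exact (exp_increasing _ _ hlt)|right; now rewrite heq]. Qed.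

Lemma exp_le_one_sub x c : 0 <= x <= c -> c < 1 -> exp (- (x / (1 - c))) <= 1 - x.
Proof.
  intros [hx0 hxc] hc1.
  assert (hexp : 1 + x / (1 - x) <= exp (x / (1 - x))) by apply exp_ineq1_le.
  replace (1 + x / (1 - x)) with (/ (1 - x)) in hexp by (field; lra).
  apply Rle_trans with (exp (- (x / (1 - x)))).
  - apply exp_le_exp, Ropp_le_contravar. unfold Rdiv.
    apply Rmult_le_compat_l; [lra|]. apply Rinv_le_contravar; lra.
  - rewrite exp_Ropp.
    apply Rinv_le_contravar in hexp; [|apply Rinv_0_lt_compat; lra].
    rewrite Rinv_inv in hexp. exact hexp.
Qed.

Lemma pow_in_01 x n : 0 < x < 1 -> 0 < x ^ n <= 1.
Proof.
  intros hx. split; [apply pow_lt; lra|].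
  induction n as [|n IH]; simpl; [lra|].
  assert (0 < x ^ n) by (apply pow_lt; lra). nra.
Qed.

Lemma pow_succ_in_01 x n : 0 < x < 1 -> 0 < x ^ S n < 1.
Proof. intros hx. destruct (pow_in_01 x n hx). simpl. split; nra. Qed.

Lemma real_Rbar_mult_l x l : real (Rbar_mult (Finite x) l) = x * real l.
Proof.
  destruct l as [l| |]; simpl; try ring;
  unfold Rbar_mult, Rbar_mult';
  repeat (destruct Rle_dec || destruct Rle_lt_or_eq_dec); simpl; ring.
Qed.

Lemma qpoch_succ_shift c b n : qpoch c b (S n) = (1 - c) * qpoch (c * b) b n.
Proof.
  induction n as [|n IH]; simpl in *; [ring|].
  rewrite IH. ring.
Qed.

Lemma qpoch_inf_shift c b : qpoch_inf c b = (1 - c) * qpoch_inf (c * b) b.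
Proof.
  unfold qpoch_inf. rewrite <- Lim_seq_incr_1.
  rewrite (Lim_seq_ext _ (fun n => (1 - c) * qpoch (c * b) b n))
    by (intros n; apply qpoch_succ_shift).
  rewrite Lim_seq_scal_l. apply real_Rbar_mult_l.
Qed.

Section QPochhammerBounds.
Variables c b : R.
Hypotheses (hc : 0 <= c < 1) (hb : 0 < b < 1).

Lemma qpoch_in_01 n : 0 < qpoch c b n <= 1.
Proof.
  induction n as [|n IH]; simpl; [lra|].
  destruct (pow_in_01 b n hb).
  assert (0 <= c * b ^ n <= c) by (split; nra). nra.
Qed.

(* Each factor satisfies 1 - c b^i >= exp (- c b^i / (1 - c)); summing the
   exponents is a geometric series. *)
Lemma qpoch_ge_exp n :
  exp (- (c / ((1 - c) * (1 - b))) * (1 - b ^ n)) <= qpoch c b n.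
Proof.
  induction n as [|n IH]; simpl.
  - rewrite Rminus_diag, Rmult_0_r, exp_0. lra.
  - destruct (pow_in_01 b n hb).
    replace (- (c / ((1 - c) * (1 - b))) * (1 - b * b ^ n))
      with (- (c / ((1 - c) * (1 - b))) * (1 - b ^ n) + - (c * b ^ n / (1 - c)))
      by (field; lra).
    rewrite exp_plus.
    apply Rmult_le_compat; try (left; apply exp_pos); [exact IH|].
    apply exp_le_one_sub; [split; nra|lra].
Qed.

Lemma qpoch_inf_in_01 : 0 < qpoch_inf c b <= 1.
Proof.
  set (m := exp (- (c / ((1 - c) * (1 - b))))).
  assert (hlow : forall n, m <= qpoch c b n).
  { intros n. eapply Rle_trans; [|apply qpoch_ge_exp].
    apply exp_le_exp. destruct (pow_in_01 b n hb).
    assert (0 <= c / ((1 - c) * (1 - b))).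
    { apply Rle_mult_inv_pos; [lra|]. apply Rmult_lt_0_compat; lra. }
    nra. }
  assert (hge := Lim_seq_le_loc (fun _ => m) (qpoch c b)).
  assert (hle := Lim_seq_le_loc (qpoch c b) (fun _ => 1)).
  rewrite Lim_seq_const in hge, hle.
  specialize (hge (ex_intro _ O (fun n _ => hlow n))).
  specialize (hle (ex_intro _ O (fun n _ => proj2 (qpoch_in_01 n)))).
  assert (0 < m) by apply exp_pos.
  unfold qpoch_inf. destruct (Lim_seq (qpoch c b)); simpl in *; lra.
Qed.

End QPochhammerBounds.

Lemma first_positive_zero (H : R -> R) (z : R) :
  continuity H -> H 0 <> 0 -> 0 < z -> H z = 0 ->
  exists m, 0 < m <= z /\ H m = 0 /\ forall u, 0 <= u < m -> H u <> 0.
Proof.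
  intros hcont hH0 hz hHz.
  set (E := fun s => 0 <= s <= z /\ forall u, 0 <= u <= s -> H u <> 0).
  assert (hE0 : E 0).
  { split; [lra|]. intros u hu. replace u with 0 by lra. exact hH0. }
  destruct (completeness E) as [m [hub hlub]].
  { exists z. intros s [hs _]. lra. }
  { exists 0. exact hE0. }
  assert (hmz : m <= z) by (apply hlub; intros s [hs _]; lra).
  assert (hbelow : forall u, 0 <= u < m -> H u <> 0).
  { intros u hu hHu. enough (m <= u) by lra.
    apply hlub. intros s [_ hs].
    destruct (Rle_lt_dec s u) as [hsu|hus]; [exact hsu|].
    exfalso. apply (hs u); [lra|exact hHu]. }
  assert (hpush : forall x, 0 <= x < z -> H x <> 0 -> (forall u, 0 <= u < x -> H u <> 0) ->
                  exists s, x < s /\ E s).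
  { intros x hx hHx hbx.
    destruct (continuous_neq_0 H x (hcont x) hHx) as [eps heps].
    exists (Rmin (x + eps / 2) z).
    assert (hxs : x < Rmin (x + eps / 2) z)
      by (apply Rmin_glb_lt; [destruct eps; simpl; lra|lra]).
    split; [exact hxs|]. split; [split; [lra|apply Rmin_r]|].
    intros u hu. destruct (Rlt_le_dec u x) as [hux|hxu]; [apply hbx; lra|].
    replace u with (x + (u - x)) by ring. apply heps.
    assert (u <= x + eps / 2) by (eapply Rle_trans; [apply hu|apply Rmin_l]).
    rewrite Rabs_right by lra. destruct eps; simpl in *; lra. }
  assert (hm0 : 0 < m).
  { destruct (hpush 0) as [s [hs hEs]]; [lra|exact hH0|intros; lra|].
    assert (s <= m) by (apply hub; exact hEs). lra. }
  exists m. split; [lra|]. split; [|exact hbelow].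
  destruct (Req_dec (H m) 0) as [hHm|hHm]; [exact hHm|exfalso].
  destruct (Req_dec m z) as [->|hmz']; [exact (hHm hHz)|].
  destruct (hpush m) as [s [hs hEs]]; [lra|exact hHm|exact hbelow|].
  assert (s <= m) by (apply hub; exact hEs). lra.
Qed.

Section HahnExtonSeries.
Variables q a : R.
Hypotheses (hq : 0 < q < 1) (ha : 0 < a) (hap : a * q ^ 2 < 1).
Local Notation p := (q ^ 2).

Definition HE_coef (k : nat) : R :=
  (-1) ^ k * q ^ (k * (k + 1)) * qpoch_inf (a * p ^ S k) p / qpoch p p k.

Definition HE_series : R -> R := PSeries HE_coef.

Lemma p_in_01 : 0 < p < 1.
Proof. destruct hq. split; nra. Qed.

Let p_in_co01 : 0 <= p < 1.
Proof. destruct p_in_01. split; lra. Qed.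

Lemma ap_pow_in_01 k : 0 <= a * p ^ S k < 1.
Proof.
  destruct p_in_01. destruct (pow_in_01 p k p_in_01).
  rewrite <- tech_pow_Rmult, <- Rmult_assoc.
  assert (0 < a * p) by (apply Rmult_lt_0_compat; lra).
  split; [left; apply Rmult_lt_0_compat; lra|].
  apply Rle_lt_trans with (a * p); [|exact hap].
  rewrite <- (Rmult_1_r (a * p)) at 2. apply Rmult_le_compat_l; lra.
Qed.

Lemma HE_coef_succ k :
  HE_coef (S k) * (1 - p ^ S k) * (1 - a * p ^ S k) = - p ^ S k * HE_coef k.
Proof.
  unfold HE_coef.
  rewrite (qpoch_inf_shift (a * p ^ S k)).
  replace (a * p ^ S k * p) with (a * p ^ S (S k)) by (simpl; ring).
  replace (S k * (S k + 1))%nat with (k * (k + 1) + 2 * S k)%nat by lia.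
  rewrite pow_add, (pow_mult q 2 (S k)), <- (tech_pow_Rmult (-1) k).
  change (qpoch p p (S k)) with (qpoch p p k * (1 - p ^ S k)).
  destruct (qpoch_in_01 p p p_in_co01 p_in_01 k). destruct (pow_succ_in_01 p k p_in_01).
  field. lra.
Qed.

Lemma HE_coef_neq0 k : HE_coef k <> 0.
Proof.
  unfold HE_coef.
  destruct (qpoch_inf_in_01 _ p (ap_pow_in_01 k) p_in_01).
  destruct (qpoch_in_01 p p p_in_co01 p_in_01 k).
  assert ((-1) ^ k <> 0) by (apply pow_nonzero; lra).
  assert (0 < q ^ (k * (k + 1))) by (apply pow_lt; lra).
  apply Rmult_integral_contrapositive_currified; [|apply Rinv_neq_0_compat; lra].
  apply Rmult_integral_contrapositive_currified; [|lra].
  apply Rmult_integral_contrapositive_currified; lra.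
Qed.

Lemma HE_coef_ratio_le k :
  Rabs (HE_coef (S k) / HE_coef k) <= p / ((1 - p) * (1 - a * p)) * p ^ k.
Proof.
  destruct p_in_01. destruct (pow_in_01 p k p_in_01).
  destruct (pow_succ_in_01 p k p_in_01). destruct (ap_pow_in_01 k).
  assert (hk := HE_coef_neq0 k).
  replace (HE_coef (S k)) with (- p ^ S k * HE_coef k / ((1 - p ^ S k) * (1 - a * p ^ S k)))
    by (rewrite <- HE_coef_succ; field; lra).
  replace (- p ^ S k * HE_coef k / ((1 - p ^ S k) * (1 - a * p ^ S k)) / HE_coef k)
    with (- p ^ S k / ((1 - p ^ S k) * (1 - a * p ^ S k))) by (field; lra).
  rewrite Rabs_div, Rabs_Ropp, !Rabs_right by (try apply Rgt_not_eq; nra).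
  replace (p / ((1 - p) * (1 - a * p)) * p ^ k) with (p ^ S k / ((1 - p) * (1 - a * p)))
    by (simpl; field; lra).
  unfold Rdiv. apply Rmult_le_compat_l; [lra|].
  apply Rinv_le_contravar; [apply Rmult_lt_0_compat; lra|].
  apply Rmult_le_compat; simpl in *; nra.
Qed.

Lemma HE_coef_radius : CV_radius HE_coef = p_infty.
Proof.
  apply CV_radius_infinite_DAlembert; [exact HE_coef_neq0|].
  destruct p_in_01.
  apply (is_lim_seq_le_le (fun _ => 0) _ (fun k => p / ((1 - p) * (1 - a * p)) * p ^ k)).
  - intros k. split; [apply Rabs_pos|apply HE_coef_ratio_le].
  - apply is_lim_seq_const.
  - replace (Finite 0) with (Rbar_mult (p / ((1 - p) * (1 - a * p))) 0)
      by (simpl; f_equal; ring).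
    apply is_lim_seq_scal_l, is_lim_seq_geom. rewrite Rabs_right; lra.
Qed.

Lemma HE_series_ex s : ex_series (fun k => HE_coef k * s ^ k).
Proof. apply ex_pseries_R, CV_radius_inside. rewrite HE_coef_radius. exact I. Qed.

Lemma HE_series_continuous : continuity HE_series.
Proof. intros s. apply PSeries_continuity. rewrite HE_coef_radius. exact I. Qed.

Lemma HE_series_0 : 0 < HE_series 0.
Proof.
  unfold HE_series. rewrite PSeries_0. unfold HE_coef. simpl.
  destruct (qpoch_inf_in_01 _ p (ap_pow_in_01 0) p_in_01). simpl in *. lra.
Qed.

(* Termwise, H(s) - (1 + a) H(p s) + a H(p^2 s) has coefficients
   c_k (1 - p^k) (1 - a p^k) = - p^k c_(k-1), which re-sums to - p s H(p s). *)
Lemma HE_series_qdiff s :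
  HE_series s + (p * s - 1 - a) * HE_series (p * s) + a * HE_series (p ^ 2 * s) = 0.
Proof.
  unfold HE_series, PSeries.
  set (A := fun k => HE_coef k * s ^ k).
  set (B := fun k => HE_coef k * (p * s) ^ k).
  set (D := fun k => HE_coef k * (p ^ 2 * s) ^ k).
  set (T := fun k => A k + (- (1 + a) * B k + a * D k)).
  assert (hA : ex_series A) by apply HE_series_ex.
  assert (hB : ex_series B) by apply HE_series_ex.
  assert (hD : ex_series D) by apply HE_series_ex.
  assert (hB' : ex_series (fun k => - (1 + a) * B k))
    by (apply (ex_series_scal_l (V := R_NormedModule)); exact hB).
  assert (hD' : ex_series (fun k => a * D k))
    by (apply (ex_series_scal_l (V := R_NormedModule)); exact hD).
  assert (hBD : ex_series (fun k => - (1 + a) * B k + a * D k))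
    by (apply (ex_series_plus (V := R_NormedModule)); assumption).
  assert (hT : ex_series T) by (apply (ex_series_plus (V := R_NormedModule)); assumption).
  assert (hsum : Series T = Series A - (1 + a) * Series B + a * Series D).
  { unfold T. rewrite !Series_plus, !Series_scal_l by assumption. ring. }
  assert (hshift : Series T = - (p * s) * Series B).
  { rewrite Series_incr_1 by exact hT. rewrite <- Series_scal_l.
    replace (T O) with 0 by (unfold T, A, B, D; simpl; ring).
    rewrite Rplus_0_l. apply Series_ext. intros k.
    unfold T, A, B, D. rewrite !Rpow_mult_distr, <- (pow_mult p 2 (S k)).
    replace (p ^ (2 * S k)) with (p ^ S k * p ^ S k) by (rewrite <- pow_add; f_equal; lia).
    transitivity (HE_coef (S k) * (1 - p ^ S k) * (1 - a * p ^ S k) * s ^ S k); [ring|].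
    rewrite HE_coef_succ. simpl. ring. }
  lra.
Qed.

Lemma HE_series_has_zero : exists z, 0 < z < (1 + a) / p /\ HE_series z = 0.
Proof.
  destruct p_in_01.
  set (s0 := (1 + a) / p). set (s1 := p ^ 2 * s0).
  assert (hs0 : 0 < s0) by (apply Rdiv_lt_0_compat; lra).
  assert (hs1 : 0 < s1 < s0).
  { destruct (pow_succ_in_01 p 1 p_in_01). unfold s1.
    split; [apply Rmult_lt_0_compat; lra|].
    rewrite <- (Rmult_1_l s0) at 2. apply Rmult_lt_compat_r; lra. }
  assert (hsign : HE_series s0 = - a * HE_series s1).
  { assert (h := HE_series_qdiff s0).
    replace (p * s0 - 1 - a) with 0 in h by (unfold s0; field; lra). fold s1 in h. lra. }
  assert (hH0 := HE_series_0).
  destruct (Rle_lt_dec (HE_series s1) 0) as [hle|hgt].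
  - destruct (IVT_cor HE_series 0 s1 HE_series_continuous) as [z [[hz0 hz1] hz]]; [lra|nra|].
    exists z. split; [|exact hz]. destruct hz0 as [hz0|heq]; [lra|subst z; lra].
  - destruct (IVT_cor HE_series s1 s0 HE_series_continuous) as [z [[hz0 hz1] hz]]; [lra|nra|].
    exists z. split; [|exact hz]. destruct hz1 as [hz1|heq]; [lra|subst z; nra].
Qed.

End HahnExtonSeries.

Lemma Rpower_sqr_mul_lt_1 q nu : 0 < q < 1 -> -1 < nu -> Rpower q (2 * nu) * q ^ 2 < 1.
Proof.
  intros hq hnu.
  rewrite <- (Rpower_pow 2 q), <- Rpower_plus by lra. unfold Rpower.
  assert (ln q < 0) by (rewrite <- ln_1; apply ln_increasing; lra).
  rewrite <- exp_0. apply exp_increasing. simpl INR. nra.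
Qed.

Lemma HE_J_eq q nu x : 0 < q ->
  HE_J q nu x =
  Rpower x nu / qpoch_inf (q ^ 2) (q ^ 2) * HE_series q (Rpower q (2 * nu)) (x ^ 2).
Proof.
  intros hq. unfold HE_J, HE_series, PSeries. f_equal. apply Series_ext. intros k.
  replace (2 * nu + 2 * INR k + 2) with (2 * nu + INR (2 * S k))
    by (rewrite mult_INR, !S_INR; simpl INR; ring).
  rewrite Rpower_plus, Rpower_pow, !pow_mult by lra.
  unfold HE_coef. rewrite <- pow_mult. reflexivity.
Qed.

Lemma HE_J_eq0_iff q nu x : 0 < q < 1 -> 0 < x ->
  HE_J q nu x = 0 <-> HE_series q (Rpower q (2 * nu)) (x ^ 2) = 0.
Proof.
  intros hq hx. rewrite HE_J_eq by lra.
  assert (0 < Rpower x nu) by apply exp_pos.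
  assert (hQ : 0 < q ^ 2 < 1) by (split; nra).
  destruct (qpoch_inf_in_01 _ _ (conj (Rlt_le _ _ (proj1 hQ)) (proj2 hQ)) hQ).
  split; [|intros ->; ring].
  intros h. apply Rmult_integral in h as [h|h]; [|exact h].
  exfalso. revert h. apply Rgt_not_eq, Rdiv_lt_0_compat; lra.
Qed.

Theorem mainTheorem8 (q nu : R) (hq0 : 0 < q) (hq1 : q < 1) (hnu : -1 < nu) :
  exists j1 : R,
    0 < j1 /\ HE_J q nu j1 = 0 /\
    (forall y : R, 0 < y < j1 -> HE_J q nu y <> 0) /\
    j1 < / q * sqrt (1 + Rpower q (2 * nu)).
Proof.
  set (a := Rpower q (2 * nu)).
  assert (hq : 0 < q < 1) by lra.
  assert (ha : 0 < a) by apply exp_pos.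
  assert (hap := Rpower_sqr_mul_lt_1 q nu hq hnu).
  destruct (HE_series_has_zero q a hq ha hap) as [z [[hz0 hzs] hz]].
  destruct (first_positive_zero _ z (HE_series_continuous q a hq ha hap)
              (Rgt_not_eq _ _ (HE_series_0 q a hq ha hap)) hz0 hz)
    as [m [[hm0 hmz] [hm hbelow]]].
  exists (sqrt m). assert (hj : 0 < sqrt m) by (apply sqrt_lt_R0; lra).
  split; [exact hj|]. split; [|split].
  - apply HE_J_eq0_iff; [exact hq|exact hj|]. rewrite pow2_sqrt by lra. exact hm.
  - intros y [hy0 hy1]. rewrite HE_J_eq0_iff by (exact hq || lra). apply hbelow.
    split; [apply pow2_ge_0|]. rewrite <- (pow2_sqrt m) by lra. simpl. nra.
  - assert (hq' : 0 < / q) by (apply Rinv_0_lt_compat; lra).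
    rewrite <- (sqrt_pow2 (/ q)), <- sqrt_mult by (apply pow2_ge_0 || lra).
    apply sqrt_lt_1_alt. split; [lra|].
    replace ((/ q) ^ 2 * (1 + a)) with ((1 + a) / q ^ 2) by (field; lra). lra.
Qed.
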